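(* There exists a frameless $2$-coloring of the infinite plane lattice $\mathbb{Z}\times\mathbb{Z}$; that is, there is a map $f:\mathbb{Z}\times\mathbb{Z}\to\Delta$ with $|\Delta|=2$ such that there do not exist integers $m,n$ and integers $p,q\ge 1$ with $f(m,n+i)=f(m+p,n+i)$ for all $0\le i\le q$ and $f(m+j,n)=f(m+j,n+q)$ for all $0\le j\le p$.
   Context: A coloring of $\mathbb{Z}\times\mathbb{Z}$ is a map into a finite set $\Delta$ of colors; a $k$-coloring uses $|\Delta|=k$. A picture frame in a coloring $f$ is a finite rectangular block $\{m,\dots,m+p\}\times\{n,\dots,n+q\}$ with $p,q\ge1$ whose first and last rows agree and whose first and last columns agree, i.e. $f(m,n+i)=f(m+p,n+i)$ for $0\le i\le q$ and $f(m+j,n)=f(m+j,n+q)$ for $0\le j\le p$. A coloring is frameless if it contains no picture frame. *)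

From Stdlib Require Import ZArith.
Open Scope Z_scope.

Definition picture_frame {Delta : Type} (f : Z -> Z -> Delta) (m n p q : Z) : Prop :=
  1 <= p /\ 1 <= q /\
  (forall i, 0 <= i <= q -> f m (n + i) = f (m + p) (n + i)) /\
  (forall j, 0 <= j <= p -> f (m + j) n = f (m + j) (n + q)).

Definition frameless {Delta : Type} (f : Z -> Z -> Delta) : Prop :=
  ~ exists m n p q, picture_frame f m n p q.

(* Colour (x, y) by w (x + y), where w : Z -> bool is a two-sided overlap-free
   word, i.e. one without a factor w(s..s+2p) of period p.  In a picture frame
   with sides p <= q the left and right columns give w (s + i) = w (s + p + i)
   for 0 <= i <= p, an overlap; if q < p the top and bottom rows do the same.

   The Thue-Morse word t is overlap-free: an overlap of even period 2r halves
   to one of period r because t (2x + b) = t x xor b, and an overlap of odd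
   period p would make t alternate on [s, s + p] (an odd position is moved by
   p to an even one, where t (2x + 1) <> t (2x)), so t (s + p) <> t s.
   Since t (z + 4^(K+1)) = t (z + 4^K) for |z| < 4^K, the words z |-> t (z + 4^K)
   stabilise to a two-sided word each of whose finite factors is a factor of t. *)

From Stdlib Require Import ZArith Lia Bool.

Definition overlap {A : Type} (w : Z -> A) (s p : Z) : Prop :=
  1 <= p /\ forall i, 0 <= i <= p -> w (s + i) = w (s + p + i).

Lemma diagonal_coloring_frameless {Delta : Type} (w : Z -> Delta) :
  (forall s p, ~ overlap w s p) -> frameless (fun x y => w (x + y)).
Proof.
  intros Hw [m [n [p [q [Hp [Hq [Hcol Hrow]]]]]]].
  destruct (Z.le_gt_cases p q) as [Hpq | Hqp].
  - apply (Hw (m + n) p). split; [exact Hp |]. intros i Hi.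
    replace (m + n + i) with (m + (n + i)) by ring.
    replace (m + n + p + i) with (m + p + (n + i)) by ring.
    apply Hcol; lia.
  - apply (Hw (m + n) q). split; [exact Hq |]. intros i Hi.
    replace (m + n + i) with (m + i + n) by ring.
    replace (m + n + q + i) with (m + i + (n + q)) by ring.
    apply Hrow; lia.
Qed.

Lemma alternating_shift (w : Z -> bool) a k : 0 <= k ->
  (forall j, 0 <= j < k -> w (a + j + 1) = negb (w (a + j))) ->
  w (a + k) = xorb (Z.odd k) (w a).
Proof.
  intros Hk; pattern k; apply natlike_ind; [| | exact Hk]; clear k Hk.
  - intros _. rewrite Z.add_0_r. reflexivity.
  - intros k Hk IH Halt.
    rewrite Z.odd_succ, <- Z.negb_odd, <- Z.add_1_r, Z.add_assoc, Halt by lia.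
    rewrite IH by (intros; apply Halt; lia).
    apply negb_xorb_l.
Qed.

(* The parity of the binary digit sum, with junk value [false] on negative integers. *)
Fixpoint thue_morse_pos (n : positive) : bool :=
  match n with
  | xH => true
  | xO n => thue_morse_pos n
  | xI n => negb (thue_morse_pos n)
  end.

Definition thue_morse (z : Z) : bool :=
  match z with Zpos n => thue_morse_pos n | _ => false end.

Lemma thue_morse_double_add (b : bool) x : 0 <= x ->
  thue_morse (2 * x + Z.b2z b) = xorb b (thue_morse x).
Proof. intros Hx; destruct b, x; reflexivity || lia. Qed.

Lemma thue_morse_succ_even x : 0 <= x -> Z.Even x ->
  thue_morse (x + 1) = negb (thue_morse x).
Proof.
  intros Hx [y ->].
  pose proof (thue_morse_double_add true y) as Hodd.
  pose proof (thue_morse_double_add false y) as Heven.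
  rewrite Z.add_0_r in Heven; change (Z.b2z true) with 1 in Hodd.
  rewrite Hodd, Heven by lia. reflexivity.
Qed.

Lemma thue_morse_block a k z : 0 <= a -> 0 <= k -> 0 <= z < 2 ^ k ->
  thue_morse (a * 2 ^ k + z) = xorb (thue_morse a) (thue_morse z).
Proof.
  intros Ha Hk; revert z; pattern k; apply natlike_ind; [| | exact Hk]; clear k Hk.
  - intros z Hz. replace z with 0 by (simpl in Hz; lia).
    rewrite Z.pow_0_r, Z.mul_1_r, Z.add_0_r, xorb_false_r. reflexivity.
  - intros k Hk IH z Hz. rewrite Z.pow_succ_r in * by exact Hk.
    rewrite (Z.div2_odd z) in Hz |- *.
    generalize (Z.div2 z) (Z.odd z) Hz; clear z Hz; intros d b Hz.
    assert (Hd : 0 <= d < 2 ^ k) by (destruct b; cbn [Z.b2z] in Hz; lia).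
    replace (a * (2 * 2 ^ k) + (2 * d + Z.b2z b))
      with (2 * (a * 2 ^ k + d) + Z.b2z b) by ring.
    rewrite !thue_morse_double_add, IH by lia.
    destruct b, (thue_morse a), (thue_morse d); reflexivity.
Qed.

Lemma thue_morse_overlap_halve s r : 0 <= s ->
  overlap thue_morse s (2 * r) -> overlap thue_morse (Z.div2 s) r.
Proof.
  intros Hs [Hr Hper]. split; [lia |]. intros i Hi.
  pose proof (Z.div2_odd s) as Hs2.
  assert (0 <= Z.div2 s) by (apply Z.div2_nonneg; exact Hs).
  specialize (Hper (2 * i) ltac:(lia)).
  replace (s + 2 * i) with (2 * (Z.div2 s + i) + Z.b2z (Z.odd s)) in Hper by lia.
  replace (s + 2 * r + 2 * i)
    with (2 * (Z.div2 s + r + i) + Z.b2z (Z.odd s)) in Hper by lia.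
  rewrite !thue_morse_double_add in Hper by lia.
  apply xorb_move_l_r_1 in Hper.
  rewrite <- xorb_assoc, xorb_nilpotent, xorb_false_l in Hper. exact Hper.
Qed.

Lemma thue_morse_odd_overlap_free s p : 0 <= s -> Z.Odd p ->
  ~ overlap thue_morse s p.
Proof.
  intros Hs Hp [Hp1 Hper].
  assert (Halt : forall j, 0 <= j < p ->
            thue_morse (s + j + 1) = negb (thue_morse (s + j))).
  { intros j Hj. destruct (Z.Even_or_Odd (s + j)) as [Heven | [a Ha]].
    - apply thue_morse_succ_even; [lia | exact Heven].
    - (* shifting by the odd period [p] makes the position even *)
      destruct Hp as [b Hb].
      replace (s + j + 1) with (s + (j + 1)) by ring.
      rewrite (Hper j), (Hper (j + 1)) by lia.
      replace (s + p + (j + 1)) with (s + p + j + 1) by ring.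
      apply thue_morse_succ_even; [lia |]. exists (a + b + 1). lia. }
  pose proof (alternating_shift thue_morse s p ltac:(lia) Halt) as Hshift.
  rewrite (proj2 (Z.odd_spec p) Hp) in Hshift.
  specialize (Hper 0 ltac:(lia)). rewrite !Z.add_0_r, Hshift in Hper.
  destruct (thue_morse s); discriminate.
Qed.

Theorem thue_morse_overlap_free s p : 0 <= s -> ~ overlap thue_morse s p.
Proof.
  intros Hs Hov. assert (Hp : 0 <= p) by (destruct Hov; lia).
  revert s Hs Hov; pattern p; apply Z_lt_induction; [| exact Hp]; clear p Hp.
  intros p IH s Hs Hov.
  destruct (Z.Even_or_Odd p) as [[r ->] | Hodd].
  - assert (Hr : 1 <= r) by (destruct Hov; lia).
    apply (IH r ltac:(lia) (Z.div2 s)).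
    + apply Z.div2_nonneg; exact Hs.
    + apply thue_morse_overlap_halve; assumption.
  - exact (thue_morse_odd_overlap_free s p Hs Hodd Hov).
Qed.

(* [thue_morse 1 = thue_morse 4] handles [z >= 0], and [thue_morse 3 = false]
   handles [z < 0]; powers of 2 would fail the latter. *)
Lemma thue_morse_shift_pow4_succ K z : 0 <= K -> Z.abs z < 4 ^ K ->
  thue_morse (z + 4 ^ (K + 1)) = thue_morse (z + 4 ^ K).
Proof.
  intros HK Hz.
  assert (Hpow : 4 ^ K = 2 ^ (2 * K)) by (rewrite Z.pow_mul_r by lia; reflexivity).
  rewrite Z.pow_add_r, Z.pow_1_r, Hpow by lia. rewrite Hpow in Hz.
  destruct (Z.le_gt_cases 0 z) as [Hpos | Hneg].
  - replace (z + 2 ^ (2 * K) * 4) with (4 * 2 ^ (2 * K) + z) by ring.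
    replace (z + 2 ^ (2 * K)) with (1 * 2 ^ (2 * K) + z) by ring.
    rewrite !thue_morse_block by lia. reflexivity.
  - replace (z + 2 ^ (2 * K) * 4) with (3 * 2 ^ (2 * K) + (z + 2 ^ (2 * K))) by ring.
    rewrite thue_morse_block by lia. reflexivity.
Qed.

Definition thue_morse_two_sided (z : Z) : bool := thue_morse (z + 4 ^ Z.abs z).

Lemma thue_morse_two_sided_eq z K : Z.abs z <= K ->
  thue_morse_two_sided z = thue_morse (z + 4 ^ K).
Proof.
  intros HK. replace K with (Z.abs z + (K - Z.abs z)) by ring.
  pattern (K - Z.abs z); apply natlike_ind; [| | lia]; clear K HK.
  - rewrite Z.add_0_r. reflexivity.
  - intros d Hd IH.
    rewrite Z.add_succ_r, <- Z.add_1_r, thue_morse_shift_pow4_succ; [exact IH | lia |].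
    apply (Z.le_lt_trans _ (Z.abs z + d)); [lia |].
    apply Z.pow_gt_lin_r; lia.
Qed.

Lemma thue_morse_two_sided_overlap_free s p : ~ overlap thue_morse_two_sided s p.
Proof.
  intros [Hp Hper].
  assert (HK : forall x, s <= x <= s + 2 * p ->
            thue_morse_two_sided x = thue_morse (x + 4 ^ (Z.abs s + 2 * p)))
    by (intros x Hx; apply thue_morse_two_sided_eq; lia).
  pose proof (Z.pow_gt_lin_r 4 (Z.abs s + 2 * p) ltac:(lia) ltac:(lia)) as Hlin.
  apply (thue_morse_overlap_free (s + 4 ^ (Z.abs s + 2 * p)) p); [lia |].
  split; [exact Hp |]. intros i Hi.
  replace (s + 4 ^ (Z.abs s + 2 * p) + i)
    with (s + i + 4 ^ (Z.abs s + 2 * p)) by ring.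
  replace (s + 4 ^ (Z.abs s + 2 * p) + p + i)
    with (s + p + i + 4 ^ (Z.abs s + 2 * p)) by ring.
  rewrite <- !HK by lia. apply Hper; lia.
Qed.

Theorem theorem2 : exists f : Z -> Z -> bool, frameless f.
Proof.
  exists (fun x y => thue_morse_two_sided (x + y)).
  apply diagonal_coloring_frameless, thue_morse_two_sided_overlap_free.
Qed.
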